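(* If a solitary wave in $\mathcal W$ satisfies $u_x<0$ in $\Omega^+\cup S^+$, then $\sup_{\overline\Omega}|v/u|<1$.
   Context: Fix constants $g>0$ and $P_{\mathrm{atm}}$. A solitary wave is a tuple $(u,v,P,\eta,u_\infty,d)$ with $d>0$, $\eta\in C^4_{\mathrm{bdd}}(\mathbb R)$, $u_\infty\in C^3[-d,0]$, $u,v,P\in C^3_{\mathrm{bdd}}(\overline\Omega)$ (bounded continuous derivatives up to the given order), where $\Omega=\{(x,y):x\in\mathbb R,\ -d<y<\eta(x)\}$, with $u,P,\eta$ even in $x$ and $v$ odd in $x$, satisfying $uu_x+vu_y=-P_x$, $uv_x+vv_y=-P_y-g$, $u_x+v_y=0$ in $\Omega$; $P=P_{\mathrm{atm}}$ and $v=\eta_xu$ on $y=\eta(x)$; $v=0$ on $y=-d$; and, uniformly in $y$, $D^kv\to0$, $\eta\to0$, $D^ku(x,y)\to D^ku_\infty(y)$ as $x\to\pm\infty$ for $k=0,1,2$. It is assumed that $\sup_\Omega u<0$. There is then a stream function $\psi$ with $\psi_y=u$, $\psi_x=-v$, $\psi=0$ on the free surface, $\psi=m>0$ on $y=-d$, and a vorticity function $\gamma\in C^2[0,m]$ with $v_x-u_y=\gamma(\psi)$; it is assumed $\gamma\le0,\gamma'\le0,\gamma''\le0$ on $(0,m)$. A wave is trivial if $u,v,\eta,P$ depend only on $y$. Let $\Omega^+=\{x>0,\ -d<y<\eta(x)\}$, $S^+=\{(x,\eta(x)):x>0\}$. A wave is monotone if $v>0$ in $\Omega^+\cup S^+$.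 $\mathcal W$ is the set of such solitary waves that are monotone or trivial. *)

From Stdlib Require Import Reals List.
From Coquelicot Require Import Coquelicot.
Open Scope R_scope.

Definition pDx (f : R -> R -> R) : R -> R -> R :=
  fun x y => Derive (fun t => f t y) x.
Definition pDy (f : R -> R -> R) : R -> R -> R :=
  fun x y => Derive (fun t => f x t) y.

Fixpoint pD (w : list bool) (f : R -> R -> R) : R -> R -> R :=
  match w with
  | nil => f
  | b :: w' => (if b then pDx else pDy) (pD w' f)
  end.

Definition Ck_on (k : nat) (U : R * R -> Prop) (f : R -> R -> R) : Prop :=
  forall (w : list bool) (x y : R), U (x, y) ->
    ((length w < k)%nat ->
       ex_derive (fun t => pD w f t y) x /\ ex_derive (fun t => pD w f x t) y) /\
    ((length w <= k)%nat ->
       continuous (fun p : R * R => pD w f (fst p) (snd p)) (x, y)).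

Definition Ckbdd_on (k : nat) (D : R -> R -> Prop) (f : R -> R -> R) : Prop :=
  (exists U : R * R -> Prop,
      open U /\ (forall x y, D x y -> U (x, y)) /\ Ck_on k U f) /\
  (exists B : R, forall (w : list bool) (x y : R),
      (length w <= k)%nat -> D x y -> Rabs (pD w f x y) <= B).

Definition Ckbdd_R (k : nat) (f : R -> R) : Prop :=
  (forall (n : nat) (x : R), (n < k)%nat -> ex_derive (Derive_n f n) x) /\
  (forall (n : nat) (x : R), (n <= k)%nat -> continuous (Derive_n f n) x) /\
  (exists B : R, forall (n : nat) (x : R), (n <= k)%nat -> Rabs (Derive_n f n x) <= B).

Definition Ck_interval (k : nat) (a b : R) (f : R -> R) : Prop :=
  exists delta : R, 0 < delta /\
    forall (n : nat) (z : R), a - delta < z < b + delta ->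
      ((n < k)%nat -> ex_derive (Derive_n f n) z) /\
      ((n <= k)%nat -> continuous (Derive_n f n) z).

Definition Omega (d : R) (eta : R -> R) (x y : R) : Prop := -d < y < eta x.
Definition Omega_bar (d : R) (eta : R -> R) (x y : R) : Prop := -d <= y <= eta x.

Record solitary_wave (g Patm : R) (u v P : R -> R -> R) (eta uinf : R -> R)
    (d : R) : Prop := {
  sw_d_pos : 0 < d;
  sw_eta_above_bed : forall x, -d < eta x;
  sw_eta_reg : Ckbdd_R 4 eta;
  sw_uinf_reg : Ck_interval 3 (-d) 0 uinf;
  sw_u_reg : Ckbdd_on 3 (Omega_bar d eta) u;
  sw_v_reg : Ckbdd_on 3 (Omega_bar d eta) v;
  sw_P_reg : Ckbdd_on 3 (Omega_bar d eta) P;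
  sw_eta_even : forall x, eta (- x) = eta x;
  sw_parity : forall x y, Omega_bar d eta x y ->
      u (- x) y = u x y /\ P (- x) y = P x y /\ v (- x) y = - v x y;
  sw_euler_x : forall x y, Omega d eta x y ->
      u x y * pDx u x y + v x y * pDy u x y = - pDx P x y;
  sw_euler_y : forall x y, Omega d eta x y ->
      u x y * pDx v x y + v x y * pDy v x y = - pDy P x y - g;
  sw_incompressible : forall x y, Omega d eta x y ->
      pDx u x y + pDy v x y = 0;
  sw_dynamic : forall x, P x (eta x) = Patm;
  sw_kinematic : forall x, v x (eta x) = Derive eta x * u x (eta x);
  sw_bed : forall x, v x (- d) = 0;
  sw_decay : forall eps, 0 < eps -> exists M, forall x, M < Rabs x ->
      Rabs (eta x) < eps /\
      forall (y : R) (w : list bool), Omega_bar d eta x y -> (length w <= 2)%nat ->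
        Rabs (pD w v x y) < eps /\
        Rabs (pD w u x y - pD w (fun _ y' => uinf y') x y) < eps
}.

Definition sup_u_neg (d : R) (eta : R -> R) (u : R -> R -> R) : Prop :=
  exists c : R, c < 0 /\ forall x y, Omega d eta x y -> u x y <= c.

Definition stream_vorticity_hyp (d : R) (eta : R -> R) (u v : R -> R -> R) : Prop :=
  exists (psi : R -> R -> R) (m : R) (gamma : R -> R),
    0 < m /\
    (forall x y, Omega d eta x y ->
        ex_derive (fun t => psi t y) x /\ ex_derive (fun t => psi x t) y /\
        pDy psi x y = u x y /\ pDx psi x y = - v x y) /\
    (forall x y, Omega_bar d eta x y ->
        filterlim (fun p : R * R => psi (fst p) (snd p))
          (within (fun p : R * R => Omega_bar d eta (fst p) (snd p)) (locally (x, y)))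
          (locally (psi x y))) /\
    (forall x, psi x (eta x) = 0) /\
    (forall x, psi x (- d) = m) /\
    Ck_interval 2 0 m gamma /\
    (forall x y, Omega_bar d eta x y -> pDx v x y - pDy u x y = gamma (psi x y)) /\
    (forall z, 0 < z < m ->
        gamma z <= 0 /\ Derive gamma z <= 0 /\ Derive_n gamma 2 z <= 0).

Definition trivial_wave (d : R) (eta : R -> R) (u v P : R -> R -> R) : Prop :=
  (forall x1 x2, eta x1 = eta x2) /\
  (forall x1 x2 y, Omega_bar d eta x1 y -> Omega_bar d eta x2 y ->
      u x1 y = u x2 y /\ v x1 y = v x2 y /\ P x1 y = P x2 y).

Definition monotone_wave (d : R) (eta : R -> R) (v : R -> R -> R) : Prop :=
  forall x y, 0 < x -> -d < y <= eta x -> 0 < v x y.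

Definition in_W (g Patm : R) (u v P : R -> R -> R) (eta uinf : R -> R) (d : R) : Prop :=
  solitary_wave g Patm u v P eta uinf d /\
  sup_u_neg d eta u /\
  stream_vorticity_hyp d eta u v /\
  (monotone_wave d eta v \/ trivial_wave d eta u v P).

From Stdlib Require Import Reals List Lra Lia Classical ClassicalEpsilon.
From Coquelicot Require Import Coquelicot.
Open Scope R_scope.

(* Everything rests on [u + v]. By incompressibility and the sign of the
   vorticity, [(u + v)_x - (u + v)_y = 2 u_x + gamma(psi) < 0] in [Omega+ U S+],
   so [u + v] increases along each line of slope [-1] followed towards the axis.
   On the axis [v = 0], and on the surface the kinematic condition gives
   [u + v = u (1 + eta')], where [1 + eta' > 0] for [x >= 0] by the same
   monotonicity along the surface. Hence [0 < v < -u] in [Omega+], and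
   [|v / u| < 1] everywhere by symmetry. The bound is uniform because [v -> 0]
   at infinity while [u <= c0 < 0], and the remaining bounded part is compact. *)

Lemma Ck_on_continuity_2d k U f w x y :
  Ck_on k U f -> U (x, y) -> (length w <= k)%nat -> continuity_2d_pt (pD w f) x y.
Proof. intros Hf Hxy Hw. apply continuity_2d_pt_filterlim, (proj2 (Hf w x y Hxy) Hw). Qed.

Lemma Ck_on_ex_diff_2 k U f x y :
  (2 <= k)%nat -> Ck_on k U f -> U (x, y) -> ex_diff_n f 2 x y.
Proof.
  intros Hk Hf Hxy.
  assert (C : forall w, (length w <= 2)%nat -> continuity_2d_pt (pD w f) x y)
    by (intros w Hw; apply (Ck_on_continuity_2d k U); auto; lia).
  assert (Ex : forall w, (length w < 2)%nat -> ex_derive (fun t => pD w f t y) x)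
    by (intros w Hw; apply (proj1 (Hf w x y Hxy)); lia).
  assert (Ey : forall w, (length w < 2)%nat -> ex_derive (fun t => pD w f x t) y)
    by (intros w Hw; apply (proj1 (Hf w x y Hxy)); lia).
  simpl; repeat split;
    first [ apply (C nil) | apply (C (true :: nil)) | apply (C (false :: nil))
          | apply (C (true :: true :: nil)) | apply (C (false :: true :: nil))
          | apply (C (true :: false :: nil)) | apply (C (false :: false :: nil))
          | apply (Ex nil) | apply (Ex (true :: nil)) | apply (Ex (false :: nil))
          | apply (Ey nil) | apply (Ey (true :: nil)) | apply (Ey (false :: nil)) ];
    simpl; lia.
Qed.

Lemma DL_pol_1 f x y dx dy :
  DL_pol 1 f x y dx dy = f x y + (pDx f x y * dx + pDy f x y * dy).
Proof.
  unfold DL_pol, differential, partial_derive, pDx, pDy; simpl.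
  unfold Binomial.C; simpl; field.
Qed.

(* The first-order Taylor-Lagrange remainder is [O(|h|^2)]. *)
Lemma Ck_on_differentiable k U f x y :
  (2 <= k)%nat -> open U -> Ck_on k U f -> U (x, y) ->
  differentiable_pt_lim f x y (pDx f x y) (pDy f x y).
Proof.
  intros Hk HU Hf Hxy.
  destruct (Taylor_Lagrange_2d f 1 x y) as [D [d0 Hd0]].
  { apply locally_2d_impl with (fun a b => U (a, b)).
    - apply locally_2d_forall; intros a b Hab; apply (Ck_on_ex_diff_2 k U); auto.
    - apply locally_2d_locally, (locally_open U); [exact HU| intros [a b]; auto| exact Hxy]. }
  intros eps.
  assert (HD : 0 < Rabs D + 1) by (pose proof (Rabs_pos D); lra).
  assert (Hr : 0 < Rmin d0 (eps / (Rabs D + 1))).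
  { apply Rmin_pos; [apply cond_pos| apply Rdiv_lt_0_compat; [apply cond_pos| lra]]. }
  exists (mkposreal _ Hr); simpl; intros a b Ha Hb.
  pose proof (Rmin_l d0 (eps / (Rabs D + 1))); pose proof (Rmin_r d0 (eps / (Rabs D + 1))).
  specialize (Hd0 a b ltac:(lra) ltac:(lra)); rewrite DL_pol_1 in Hd0.
  set (M := Rmax (Rabs (a - x)) (Rabs (b - y))) in *.
  assert (HM0 : 0 <= M) by (eapply Rle_trans; [apply Rabs_pos| apply Rmax_l]).
  assert (HMeps : (Rabs D + 1) * M <= eps).
  { assert (M <= eps / (Rabs D + 1)) by (unfold M; apply Rmax_case; lra).
    apply (Rmult_le_compat_l (Rabs D + 1)) in H1; [|lra].
    replace ((Rabs D + 1) * (eps / (Rabs D + 1))) with (pos eps) in H1 by (field; lra).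
    exact H1. }
  pose proof (Rle_abs D).
  replace (f a b - f x y - (pDx f x y * (a - x) + pDy f x y * (b - y)))
    with (f a b - (f x y + (pDx f x y * (a - x) + pDy f x y * (b - y)))) by ring.
  eapply Rle_trans; [exact Hd0|]. simpl. nra.
Qed.

Lemma Ckbdd_on_continuity_2d k D f w x y :
  Ckbdd_on k D f -> (length w <= k)%nat -> D x y -> continuity_2d_pt (pD w f) x y.
Proof. intros [[U [_ [HDU Hf]]] _] Hw Hxy. apply (Ck_on_continuity_2d k U); auto. Qed.

Lemma Ckbdd_on_differentiable k D f x y :
  (2 <= k)%nat -> Ckbdd_on k D f -> D x y ->
  differentiable_pt_lim f x y (pDx f x y) (pDy f x y).
Proof. intros Hk [[U [HU [HDU Hf]]] _] Hxy. apply (Ck_on_differentiable k U); auto. Qed.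

Lemma Ckbdd_R_ex_derive k f x : (1 <= k)%nat -> Ckbdd_R k f -> ex_derive f x.
Proof. intros Hk [Hd _]. apply (Hd 0%nat x); lia. Qed.

Lemma Ckbdd_R_continuous k f x : Ckbdd_R k f -> continuous f x.
Proof. intros [_ [Hc _]]. apply (Hc 0%nat x); lia. Qed.

Lemma Ckbdd_R_continuous_Derive k f x : (1 <= k)%nat -> Ckbdd_R k f -> continuous (Derive f) x.
Proof. intros Hk [_ [Hc _]]. apply (Hc 1%nat x); lia. Qed.

Lemma Ckbdd_R_bounded_above k f : Ckbdd_R k f -> exists B, forall x, f x <= B.
Proof.
  intros [_ [_ [B HB]]]. exists B; intros x.
  specialize (HB 0%nat x ltac:(lia)); apply Rabs_le_between in HB; simpl in HB; lra.
Qed.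
Definition continuous_within (a b : R) (g : R -> R) (y : R) : Prop :=
  forall eps, 0 < eps -> exists del, 0 < del /\
    forall t, a < t < b -> Rabs (t - y) < del -> Rabs (g t - g y) < eps.

Lemma continuous_within_of_continuous a b g y : continuous g y -> continuous_within a b g y.
Proof.
  intros Hg eps Heps.
  destruct (proj1 (filterlim_locally g (g y)) Hg (mkposreal eps Heps)) as [del Hdel].
  exists del; split; [apply cond_pos|]. intros t _ Ht. exact (Hdel t Ht).
Qed.

Lemma continuous_within_of_2d a b f x y :
  continuity_2d_pt f x y -> continuous_within a b (fun t => f x t) y.
Proof.
  intros Hf eps Heps. destruct (Hf (mkposreal eps Heps)) as [del Hdel].
  exists del; split; [apply cond_pos|]. intros t _ Ht. apply Hdel; [|exact Ht].
  rewrite Rminus_diag, Rabs_R0; apply cond_pos.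
Qed.

Lemma continuous_within_sub a b a' b' g y :
  a <= a' -> b' <= b -> continuous_within a b g y -> continuous_within a' b' g y.
Proof.
  intros Ha Hb Hg eps Heps. destruct (Hg eps Heps) as [del [Hdel Hnear]].
  exists del; split; [exact Hdel|]. intros t Ht. apply Hnear; lra.
Qed.

Lemma interval_point_near a b y del :
  a < b -> a <= y <= b -> 0 < del -> exists t, a < t < b /\ Rabs (t - y) < del.
Proof.
  intros Hab Hy Hdel. destruct (Rlt_dec y b) as [Hyb | Hyb].
  - exists (y + Rmin del (b - y) / 2).
    assert (0 < Rmin del (b - y)) by (apply Rmin_pos; lra).
    pose proof (Rmin_l del (b - y)); pose proof (Rmin_r del (b - y)).
    split; [lra|]. rewrite Rabs_right; lra.
  - exists (y - Rmin del (b - a) / 2).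
    assert (0 < Rmin del (b - a)) by (apply Rmin_pos; lra).
    pose proof (Rmin_l del (b - a)); pose proof (Rmin_r del (b - a)).
    split; [lra|]. rewrite Rabs_left; lra.
Qed.

Lemma le_at_interval_closure a b g y c :
  a < b -> a <= y <= b -> continuous_within a b g y ->
  (forall t, a < t < b -> g t <= c) -> g y <= c.
Proof.
  intros Hab Hy Hg Hc. apply Rnot_lt_le; intros Hlt.
  destruct (Hg (g y - c)) as [del [Hdel Hnear]]; [lra|].
  destruct (interval_point_near a b y del Hab Hy Hdel) as [t [Ht Hty]].
  specialize (Hnear t Ht Hty); specialize (Hc t Ht); apply Rabs_def2 in Hnear; lra.
Qed.

Lemma ge_at_interval_closure a b g y c :
  a < b -> a <= y <= b -> continuous_within a b g y ->
  (forall t, a < t < b -> c <= g t) -> c <= g y.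
Proof.
  intros Hab Hy Hg Hc. apply Rnot_lt_le; intros Hlt.
  destruct (Hg (c - g y)) as [del [Hdel Hnear]]; [lra|].
  destruct (interval_point_near a b y del Hab Hy Hdel) as [t [Ht Hty]].
  specialize (Hnear t Ht Hty); specialize (Hc t Ht); apply Rabs_def2 in Hnear; lra.
Qed.

Lemma eq_at_interval_closure a b g y c :
  a < b -> a <= y <= b -> continuous_within a b g y ->
  (forall t, a < t < b -> g t = c) -> g y = c.
Proof.
  intros Hab Hy Hg Hc. apply Rle_antisym.
  - apply (le_at_interval_closure a b); auto. intros t Ht; rewrite Hc; lra.
  - apply (ge_at_interval_closure a b); auto. intros t Ht; rewrite Hc; lra.
Qed.

(* [T] is the supremum of the times up to which [f] stays nonnegative. *)
Lemma nonneg_until_exit (f : R -> R) x :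
  0 <= x -> (forall r, continuous f r) -> 0 <= f 0 ->
  exists T, 0 <= T <= x /\ (forall r, 0 <= r <= T -> 0 <= f r) /\ (T = x \/ f T = 0).
Proof.
  intros Hx Hf Hf0.
  set (E := fun t => 0 <= t <= x /\ forall r, 0 <= r <= t -> 0 <= f r).
  assert (HE0 : E 0) by (split; [lra| intros r Hr; replace r with 0 by lra; exact Hf0]).
  destruct (completeness E) as [T [HTub HTlub]].
  { exists x; intros t [Ht _]; lra. }
  { exists 0; exact HE0. }
  assert (HT : 0 <= T <= x) by (split; [apply HTub, HE0| apply HTlub; intros t [Ht _]; lra]).
  assert (Hbelow : forall r, 0 <= r < T -> 0 <= f r).
  { intros r Hr. destruct (classic (exists t, E t /\ r < t)) as [[t [[_ Ht] Hrt]] | Hno].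
    - apply Ht; lra.
    - assert (T <= r); [|lra]. apply HTlub; intros t Et.
      apply Rnot_lt_le; intros Hrt; apply Hno; eauto. }
  assert (HfT : 0 <= f T).
  { destruct (Req_dec T 0) as [-> | HT0]; [exact Hf0|].
    apply (ge_at_interval_closure 0 T f T 0); try lra.
    - apply continuous_within_of_continuous, Hf.
    - intros t Ht; apply Hbelow; lra. }
  exists T; split; [exact HT|]; split.
  { intros r Hr. destruct (Req_dec r T) as [-> | Hne]; [exact HfT| apply Hbelow; lra]. }
  destruct (Req_dec T x) as [HTx | HTx]; [now left| right].
  apply Rle_antisym; [apply Rnot_lt_le; intros Hpos| exact HfT].
  destruct (continuous_within_of_continuous T x f T (Hf T) (f T) Hpos) as [del [Hdel Hnear]].
  destruct (interval_point_near T x T del) as [t [Ht Htd]]; try lra.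
  rewrite Rabs_right in Htd by lra.
  assert (Et : E t).
  { split; [lra|]. intros r Hr.
    destruct (Rlt_dec r T) as [HrT | HrT]; [apply Hbelow; lra|].
    destruct (Req_dec r T) as [-> | HrT']; [exact HfT|].
    specialize (Hnear r ltac:(lra) ltac:(rewrite Rabs_right; lra)).
    apply Rabs_def2 in Hnear; lra. }
  specialize (HTub t Et); lra.
Qed.

Lemma derivable_pt_lim_neg_left f T l del :
  derivable_pt_lim f T l -> l < 0 -> 0 < del -> exists s, T - del < s < T /\ f T < f s.
Proof.
  intros Hf Hl Hdel.
  destruct (Hf (- l / 2)) as [e He]; [lra|].
  pose proof (cond_pos e).
  assert (0 < Rmin (e / 2) (del / 2)) by (apply Rmin_pos; lra).
  pose proof (Rmin_l (e / 2) (del / 2)); pose proof (Rmin_r (e / 2) (del / 2)).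
  set (h := - Rmin (e / 2) (del / 2)) in *.
  specialize (He h ltac:(unfold h; lra) ltac:(unfold h; rewrite Rabs_left; lra)).
  apply Rabs_def2 in He.
  exists (T + h); split; [unfold h; lra|].
  assert (Hq : f (T + h) - f T = (f (T + h) - f T) / h * h) by (field; unfold h; lra).
  assert (h < 0) by (unfold h; lra).
  nra.
Qed.

Lemma decreasing_between_ends (p dp : R -> R) a b y :
  a < y < b -> (forall z, a < z < b -> is_derive p z (dp z) /\ dp z < 0) ->
  continuous_within a b p a -> continuous_within a b p b -> p b <= p y <= p a.
Proof.
  intros Hy Hd Ha Hb.
  assert (Hdecr : forall s t, a < s -> s < t -> t < b -> p t < p s).
  { intros s t Hs Hst Htb.
    enough (- p s < - p t) by lra.
    apply (incr_function (fun z => - p z) a b (fun z => - dp z)); auto;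
      intros z Hz1 Hz2; simpl in Hz1, Hz2.
    - apply (is_derive_opp p), Hd; lra.
    - destruct (Hd z); lra. }
  split.
  - apply (le_at_interval_closure y b p b (p y)); try lra.
    + apply (continuous_within_sub a b); [lra | lra | exact Hb].
    + intros t Ht; left; apply Hdecr; lra.
  - apply (ge_at_interval_closure a y p a (p y)); try lra.
    + apply (continuous_within_sub a b); [lra | lra | exact Ha].
    + intros t Ht; left; apply Hdecr; lra.
Qed.

Lemma Derive_even_0 f : (forall x, f (- x) = f x) -> ex_derive f 0 -> Derive f 0 = 0.
Proof.
  intros Heven Hf.
  assert (Hrefl : is_derive (fun t => f (- t)) 0 (- Derive f 0)).
  { auto_derive; [now rewrite Ropp_0|].
    change (Derive (fun t => f t)) with (Derive f); rewrite Ropp_0; ring. }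
  assert (Hsame : is_derive (fun t => f (- t)) 0 (Derive f 0)).
  { apply (is_derive_ext f); [intros t; rewrite Heven; auto| apply Derive_correct, Hf]. }
  pose proof (is_derive_unique _ _ _ Hrefl); pose proof (is_derive_unique _ _ _ Hsame); lra.
Qed.

Lemma list_lt_max {A} (F : A -> R) (l : list A) m :
  (forall t, In t l -> F t < m) -> exists c, c < m /\ forall t, In t l -> F t <= c.
Proof.
  induction l as [|a l IH]; intros Hl.
  - exists (m - 1); split; [lra| intros t []].
  - destruct IH as [c [Hc Hcl]]; [intros t Ht; apply Hl; right; exact Ht|].
    exists (Rmax c (F a)); split; [apply Rmax_case; [exact Hc| apply Hl; left; reflexivity]|].
    intros t [<- | Ht]; [apply Rmax_r| eapply Rle_trans; [apply Hcl, Ht| apply Rmax_l]].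
Qed.

(* Each point of the rectangle has a neighbourhood on which [F] stays below the
   midpoint of [F] and [m]; finitely many of them cover the rectangle. *)
Lemma rectangle_sup_lt (F : R -> R -> R) a b a' b' m :
  (forall x y, a <= x <= b -> a' <= y <= b' -> continuity_2d_pt F x y /\ F x y < m) ->
  exists c, c < m /\ forall x y, a <= x <= b -> a' <= y <= b' -> F x y <= c.
Proof.
  intros HF.
  set (rect := fun x y => a <= x <= b /\ a' <= y <= b').
  assert (Hex : forall x y, exists del : posreal, rect x y ->
     forall s t, Rabs (s - x) < del -> Rabs (t - y) < del -> F s t < (m + F x y) / 2).
  { intros x y. destruct (excluded_middle_informative (rect x y)) as [[Hx Hy] | Hr].
    - destruct (HF x y Hx Hy) as [Hc Hlt].
      assert (He : 0 < (m - F x y) / 2) by lra.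
      destruct (Hc (mkposreal _ He)) as [del Hdel]. exists del; intros _ s t Hs Ht.
      specialize (Hdel s t Hs Ht); simpl in Hdel; apply Rabs_def2 in Hdel; lra.
    - exists (mkposreal 1 Rlt_0_1); intros Hr'; contradiction. }
  set (delta := fun x y => proj1_sig (constructive_indefinite_description _ (Hex x y))).
  assert (Hdelta : forall x y, rect x y -> forall s t,
     Rabs (s - x) < delta x y -> Rabs (t - y) < delta x y -> F s t < (m + F x y) / 2).
  { intros x y; unfold delta; destruct constructive_indefinite_description as [del Hdel]; exact Hdel. }
  apply NNPP; intros Hno.
  apply (compactness_list 2 (a, (a', tt)) (b, (b', tt))
           (fun p => match p with (x, (y, _)) => delta x y end)).
  intros [l Hl]; apply Hno.
  set (G := fun p : Compactness.Tn 2 R => match p with (x, (y, _)) =>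
     if excluded_middle_informative (rect x y) then (m + F x y) / 2 else m - 1 end).
  destruct (list_lt_max G l m) as [c [Hc Hcl]].
  { intros [x [y []]] _; unfold G.
    destruct excluded_middle_informative as [[Hx Hy] |]; [|lra].
    destruct (HF x y Hx Hy); lra. }
  exists c; split; [exact Hc|]. intros x y Hx Hy.
  destruct (Hl (x, (y, tt))) as [[s [t []]] [Hin [[Hs1 [Ht1 _]] [Hs2 [Ht2 _]]]]]; [simpl; auto|].
  specialize (Hcl _ Hin); unfold G in Hcl.
  destruct excluded_middle_informative as [Hr | Hr]; [|exfalso; apply Hr; split; auto].
  specialize (Hdelta s t Hr x y Hs2 Ht2); lra.
Qed.

Definition clamp (lo hi t : R) : R := Rmax lo (Rmin t hi).

Lemma clamp_between lo hi t : lo <= hi -> lo <= clamp lo hi t <= hi.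
Proof. intros H; unfold clamp; split; [apply Rmax_l| apply Rmax_lub; [lra| apply Rmin_r]]. Qed.

Lemma clamp_id lo hi t : lo <= t <= hi -> clamp lo hi t = t.
Proof. intros H; unfold clamp; rewrite Rmin_left, Rmax_right; lra. Qed.

Lemma clamp_lipschitz lo hi hi' t t' :
  Rabs (clamp lo hi t - clamp lo hi' t') <= Rabs (hi - hi') + Rabs (t - t').
Proof. unfold clamp, Rmax, Rmin, Rabs; repeat (destruct Rle_dec || destruct Rcase_abs); lra. Qed.

Lemma continuity_2d_clamp (F : R -> R -> R) (h : R -> R) lo x y :
  (forall a, lo <= h a) -> (forall a, continuous h a) ->
  (forall a b, lo <= b <= h a -> continuity_2d_pt F a b) ->
  continuity_2d_pt (fun a b => F a (clamp lo (h a) b)) x y.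
Proof.
  intros Hlo Hh HF eps.
  destruct (HF x (clamp lo (h x) y) (clamp_between lo (h x) y (Hlo x)) eps) as [d1 Hd1].
  pose proof (cond_pos d1).
  destruct (continuous_within_of_continuous (x - 1) (x + 1) h x (Hh x) (d1 / 2))
    as [d2 [Hd2 Hnear]]; [lra|].
  assert (Hr : 0 < Rmin 1 (Rmin (d1 / 2) d2)) by (repeat apply Rmin_pos; lra).
  pose proof (Rmin_l 1 (Rmin (d1 / 2) d2)); pose proof (Rmin_r 1 (Rmin (d1 / 2) d2)).
  pose proof (Rmin_l (d1 / 2) d2); pose proof (Rmin_r (d1 / 2) d2).
  exists (mkposreal _ Hr); simpl; intros a b Ha Hb.
  assert (Hha : Rabs (h a - h x) < d1 / 2).
  { apply Hnear; [apply Rabs_def2 in Ha; lra| lra]. }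
  apply Hd1; [lra|].
  eapply Rle_lt_trans; [apply clamp_lipschitz| lra].
Qed.

Lemma filterlim_within_vertical (f : R -> R -> R) (D : R -> R -> Prop) a b x y :
  filterlim (fun p : R * R => f (fst p) (snd p))
    (within (fun p : R * R => D (fst p) (snd p)) (locally (x, y))) (locally (f x y)) ->
  (forall t, a < t < b -> D x t) -> continuous_within a b (fun t => f x t) y.
Proof.
  intros Hf HD eps Heps.
  apply (proj1 (filterlim_locally _ _)) with (eps := mkposreal eps Heps) in Hf.
  destruct (proj2 (locally_2d_locally (fun s t => D s t -> ball (f x y) eps (f s t)) x y) Hf)
    as [del Hdel].
  exists del; split; [apply cond_pos|]. intros t Ht Hty.
  apply (Hdel x t); [rewrite Rminus_diag, Rabs_R0; apply cond_pos| exact Hty| apply HD, Ht].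
Qed.

(* The stream function decreases in [y] from [m] on the bed to [0] on the
   surface, so [gamma (psi x y)] is evaluated inside [[0, m]]. *)
Lemma vorticity_nonpos d eta u v :
  (forall x, -d < eta x) -> (forall x y, Omega d eta x y -> u x y < 0) ->
  stream_vorticity_hyp d eta u v ->
  forall x y, Omega_bar d eta x y -> pDx v x y - pDy u x y <= 0.
Proof.
  intros Hbed Hu [psi [m [gam [Hm [Hpsi [Hpsic [Htop [Hbot [Hgam [Hvort Hsign]]]]]]]]]] x y Hxy.
  rewrite Hvort by exact Hxy.
  assert (Hgam_nonpos : forall z, 0 <= z <= m -> gam z <= 0).
  { destruct Hgam as [e [He Hgam]]. intros z Hz.
    apply (le_at_interval_closure 0 m gam z 0 Hm Hz).
    - apply continuous_within_of_continuous, (proj2 (Hgam 0%nat z ltac:(lra))); lia.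
    - intros t Ht; apply (Hsign t Ht). }
  apply Hgam_nonpos. pose proof (Hbed x). unfold Omega_bar in Hxy.
  destruct (Req_dec y (eta x)) as [-> | Hntop]; [rewrite Htop; lra|].
  destruct (Req_dec y (-d)) as [-> | Hnbot]; [rewrite Hbot; lra|].
  rewrite <- (Htop x), <- (Hbot x).
  apply (decreasing_between_ends (fun t => psi x t) (fun t => u x t) (-d) (eta x) y); [lra| | |].
  - intros z Hz. destruct (Hpsi x z Hz) as [_ [Hex [Hdy _]]].
    split; [rewrite <- Hdy; apply Derive_correct, Hex| apply Hu, Hz].
  - apply (filterlim_within_vertical psi (Omega_bar d eta)); [apply Hpsic|];
      unfold Omega_bar; intros; lra.
  - apply (filterlim_within_vertical psi (Omega_bar d eta)); [apply Hpsic|];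
      unfold Omega_bar; intros; lra.
Qed.

Lemma Rabs_div_lt_1 a b : Rabs b < Rabs a -> Rabs (b / a) < 1.
Proof.
  intros H.
  assert (Ha : a <> 0) by (intros ->; rewrite Rabs_R0 in H; pose proof (Rabs_pos b); lra).
  rewrite Rabs_div by exact Ha. apply (proj1 (Rdiv_lt_1 _ _ (Rabs_pos_lt _ Ha))), H.
Qed.

Lemma trivial_wave_pDx_zero d eta u v P x y :
  trivial_wave d eta u v P -> Omega_bar d eta x y -> pDx u x y = 0.
Proof.
  intros [Heta Hflow] Hxy. unfold pDx.
  rewrite (Derive_ext _ (fun _ => u x y)); [apply Derive_const|].
  intros t; apply (Hflow t x y); [unfold Omega_bar in *; rewrite (Heta t x)| ]; auto.
Qed.

Section MonotoneWave.

Variables (g Patm : R) (u v P : R -> R -> R) (eta uinf : R -> R) (d c0 : R).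

Hypothesis wave : solitary_wave g Patm u v P eta uinf d.
Hypothesis c0_neg : c0 < 0.
Hypothesis u_le_c0 : forall x y, Omega d eta x y -> u x y <= c0.
Hypothesis vorticity_nonpos_bar :
  forall x y, Omega_bar d eta x y -> pDx v x y - pDy u x y <= 0.
Hypothesis v_pos : monotone_wave d eta v.
Hypothesis ux_neg : forall x y, 0 < x -> -d < y <= eta x -> pDx u x y < 0.

Let eta_above_bed := sw_eta_above_bed _ _ _ _ _ _ _ _ wave.
Let eta_reg := sw_eta_reg _ _ _ _ _ _ _ _ wave.
Let u_reg := sw_u_reg _ _ _ _ _ _ _ _ wave.
Let v_reg := sw_v_reg _ _ _ _ _ _ _ _ wave.

Lemma u_le_c0_bar x y : Omega_bar d eta x y -> u x y <= c0.
Proof.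
  intros Hxy.
  apply (le_at_interval_closure (-d) (eta x) (fun t => u x t) y c0
           (eta_above_bed x) Hxy).
  - apply continuous_within_of_2d, (Ckbdd_on_continuity_2d 3 (Omega_bar d eta) u nil);
      [exact u_reg| simpl; lia| exact Hxy].
  - intros t Ht; apply u_le_c0, Ht.
Qed.

Lemma u_neg_bar x y : Omega_bar d eta x y -> u x y < 0.
Proof. intros Hxy; pose proof (u_le_c0_bar x y Hxy); lra. Qed.

Lemma incompressible_bar x y : Omega_bar d eta x y -> pDx u x y + pDy v x y = 0.
Proof.
  intros Hxy.
  apply (eq_at_interval_closure (-d) (eta x) (fun t => pDx u x t + pDy v x t) y 0
           (eta_above_bed x) Hxy).
  - apply (continuous_within_of_2d _ _ (fun a b => pDx u a b + pDy v a b)), continuity_2d_pt_plus.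
    + apply (Ckbdd_on_continuity_2d 3 (Omega_bar d eta) u (true :: nil));
        [exact u_reg| simpl; lia| exact Hxy].
    + apply (Ckbdd_on_continuity_2d 3 (Omega_bar d eta) v (false :: nil));
        [exact v_reg| simpl; lia| exact Hxy].
  - intros t Ht; apply (sw_incompressible _ _ _ _ _ _ _ _ wave), Ht.
Qed.

Lemma antidiagonal_derivative_neg x y : 0 < x -> -d < y <= eta x ->
  pDx u x y + pDx v x y - (pDy u x y + pDy v x y) < 0.
Proof.
  intros Hx Hy. assert (Hxy : Omega_bar d eta x y) by (unfold Omega_bar; lra).
  pose proof (incompressible_bar x y Hxy); pose proof (vorticity_nonpos_bar x y Hxy).
  pose proof (ux_neg x y Hx Hy); lra.
Qed.

Lemma u_add_v_derivable_along (f1 f2 : R -> R) s l1 l2 :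
  Omega_bar d eta (f1 s) (f2 s) -> derivable_pt_lim f1 s l1 -> derivable_pt_lim f2 s l2 ->
  derivable_pt_lim (fun t => u (f1 t) (f2 t) + v (f1 t) (f2 t)) s
    ((pDx u (f1 s) (f2 s) + pDx v (f1 s) (f2 s)) * l1
     + (pDy u (f1 s) (f2 s) + pDy v (f1 s) (f2 s)) * l2).
Proof.
  intros Hs H1 H2.
  replace ((pDx u (f1 s) (f2 s) + pDx v (f1 s) (f2 s)) * l1
           + (pDy u (f1 s) (f2 s) + pDy v (f1 s) (f2 s)) * l2)
    with ((pDx u (f1 s) (f2 s) * l1 + pDy u (f1 s) (f2 s) * l2)
          + (pDx v (f1 s) (f2 s) * l1 + pDy v (f1 s) (f2 s) * l2)) by ring.
  apply (derivable_pt_lim_plus (fun t => u (f1 t) (f2 t)) (fun t => v (f1 t) (f2 t)));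
    apply derivable_pt_lim_comp_2d; auto;
    apply (Ckbdd_on_differentiable 3 (Omega_bar d eta)); auto.
Qed.

Lemma u_add_v_surface x : u x (eta x) + v x (eta x) = u x (eta x) * (1 + Derive eta x).
Proof. rewrite (sw_kinematic _ _ _ _ _ _ _ _ wave); ring. Qed.

Lemma eta_surface_bar x : Omega_bar d eta x (eta x).
Proof. pose proof (eta_above_bed x); unfold Omega_bar; lra. Qed.

(* If [1 + eta'] first vanished at [T > 0], then [u + v = u (1 + eta')] along the
   surface would vanish at [T] with negative derivative, hence be positive just
   before [T], where [1 + eta' >= 0] makes it [<= 0]. *)
Lemma surface_slope_gt_m1 s : 0 <= s -> 0 < 1 + Derive eta s.
Proof.
  intros Hs; apply Rnot_le_lt; intros Hle.
  assert (Hslope0 : Derive eta 0 = 0).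
  { apply Derive_even_0; [apply (sw_eta_even _ _ _ _ _ _ _ _ wave)|].
    apply (Ckbdd_R_ex_derive 4); [lia| exact eta_reg]. }
  destruct (nonneg_until_exit (fun r => 1 + Derive eta r) s Hs) as [T [HT [Hnonneg Hexit]]].
  - intros r; apply (continuous_plus (fun _ => 1) (Derive eta));
      [apply continuous_const| apply (Ckbdd_R_continuous_Derive 4); [lia| exact eta_reg]].
  - rewrite Hslope0; lra.
  - assert (HT0 : 1 + Derive eta T = 0).
    { destruct Hexit as [-> | HT0]; [pose proof (Hnonneg s ltac:(lra)); lra| exact HT0]. }
    assert (HTpos : 0 < T).
    { destruct (Req_dec T 0) as [E | ]; [rewrite E, Hslope0 in HT0; lra| lra]. }
    destruct (derivable_pt_lim_neg_left (fun t => u t (eta t) + v t (eta t)) T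
      ((pDx u T (eta T) + pDx v T (eta T)) * 1 + (pDy u T (eta T) + pDy v T (eta T)) * Derive eta T) T)
      as [r [Hr Hlt]]; [| | exact HTpos|].
    + apply (u_add_v_derivable_along (fun t => t) eta); [apply eta_surface_bar| apply derivable_pt_lim_id|].
      apply is_derive_Reals, Derive_correct, (Ckbdd_R_ex_derive 4); [lia| exact eta_reg].
    + replace (Derive eta T) with (-1) by lra.
      pose proof (antidiagonal_derivative_neg T (eta T) HTpos
                    ltac:(pose proof (eta_above_bed T); lra)).
      lra.
    + rewrite !u_add_v_surface, HT0 in Hlt.
      pose proof (u_neg_bar r (eta r) (eta_surface_bar r)); pose proof (Hnonneg r ltac:(lra)).
      nra.
Qed.

Lemma v_axis x y : x = 0 -> Omega_bar d eta x y -> v x y = 0.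
Proof.
  intros -> Hxy. destruct (sw_parity _ _ _ _ _ _ _ _ wave 0 y Hxy) as [_ [_ Hodd]].
  rewrite Ropp_0 in Hodd; lra.
Qed.

Lemma u_add_v_neg x y : 0 < x -> Omega_bar d eta x y -> u x y + v x y < 0.
Proof.
  intros Hx Hxy. unfold Omega_bar in Hxy.
  set (phi r := u (x - r) (y + r) + v (x - r) (y + r)).
  set (dphi r := (pDx u (x - r) (y + r) + pDx v (x - r) (y + r)) * (-1)
                 + (pDy u (x - r) (y + r) + pDy v (x - r) (y + r)) * 1).
  destruct (nonneg_until_exit (fun r => eta (x - r) - (y + r)) x) as [T [HT [Hbelow Hexit]]].
  - lra.
  - intros r. apply continuity_pt_filterlim, continuity_pt_minus.
    + apply (continuity_pt_comp (fun r => x - r) eta).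
      * apply continuity_pt_minus; [apply continuity_pt_const; intros ? ?| apply continuity_pt_id]; auto.
      * apply continuity_pt_filterlim, (Ckbdd_R_continuous 4), eta_reg.
    + apply continuity_pt_plus; [apply continuity_pt_const; intros ? ?| apply continuity_pt_id]; auto.
  - replace (x - 0) with x by ring; lra.
  - assert (Hbar : forall r, 0 <= r <= T -> Omega_bar d eta (x - r) (y + r)).
    { intros r Hr; specialize (Hbelow r Hr); unfold Omega_bar; lra. }
    assert (HphiT : phi T < 0).
    { unfold phi. destruct Hexit as [-> | Hsurf].
      - rewrite (v_axis (x - x)) by (ring || exact (Hbar x ltac:(lra))).
        pose proof (u_neg_bar (x - x) (y + x) (Hbar x ltac:(lra))); lra.
      - replace (y + T) with (eta (x - T)) by lra.
        rewrite u_add_v_surface.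
        pose proof (u_neg_bar _ _ (eta_surface_bar (x - T))).
        pose proof (surface_slope_gt_m1 (x - T) ltac:(lra)); nra. }
    replace (u x y + v x y) with (phi 0) by (unfold phi; f_equal; f_equal; ring).
    destruct (Req_dec T 0) as [HT0 | HT0]; [rewrite HT0 in HphiT; exact HphiT|].
    destruct (MVT_cor2 phi dphi 0 T) as [c [Hmvt Hc]]; [lra| |].
    + intros c Hc. apply (u_add_v_derivable_along (fun r => x - r) (fun r => y + r));
        [apply Hbar; lra| |]; apply is_derive_Reals; auto_derive; auto; ring.
    + assert (0 < dphi c).
      { unfold dphi. pose proof (Hbelow c ltac:(lra)).
        pose proof (antidiagonal_derivative_neg (x - c) (y + c) ltac:(lra) ltac:(lra)); lra. }
      nra.
Qed.

Lemma ratio_continuous_bar a b :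
  Omega_bar d eta a b -> continuity_2d_pt (fun s t => Rabs (v s t / u s t)) a b.
Proof.
  intros Hab.
  apply (continuity_1d_2d_pt_comp Rabs (fun s t => v s t / u s t)); [apply Rcontinuity_abs|].
  unfold Rdiv; apply continuity_2d_pt_mult;
    [|apply continuity_2d_pt_inv; [|pose proof (u_neg_bar a b Hab); lra]].
  - apply (Ckbdd_on_continuity_2d 3 (Omega_bar d eta) v nil); [exact v_reg| simpl; lia| exact Hab].
  - apply (Ckbdd_on_continuity_2d 3 (Omega_bar d eta) u nil); [exact u_reg| simpl; lia| exact Hab].
Qed.

Lemma ratio_lt_1_right x y : 0 <= x -> Omega_bar d eta x y -> Rabs (v x y / u x y) < 1.
Proof.
  intros Hx Hxy. apply Rabs_div_lt_1. pose proof (u_neg_bar x y Hxy).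
  rewrite (Rabs_left (u x y)) by lra.
  destruct (Req_dec x 0) as [Hx0 | Hx0]; [rewrite (v_axis x y Hx0 Hxy), Rabs_R0; lra|].
  destruct (Req_dec y (-d)) as [-> | Hyd];
    [rewrite (sw_bed _ _ _ _ _ _ _ _ wave x), Rabs_R0; lra|].
  pose proof (v_pos x y ltac:(lra) ltac:(unfold Omega_bar in Hxy; lra)).
  pose proof (u_add_v_neg x y ltac:(lra) Hxy).
  rewrite Rabs_right; lra.
Qed.

Lemma ratio_lt_1 x y : Omega_bar d eta x y -> Rabs (v x y / u x y) < 1.
Proof.
  intros Hxy. destruct (Rle_dec 0 x) as [Hx | Hx]; [apply ratio_lt_1_right; auto|].
  assert (Hxy' : Omega_bar d eta (- x) y).
  { unfold Omega_bar in *; rewrite (sw_eta_even _ _ _ _ _ _ _ _ wave); exact Hxy. }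
  destruct (sw_parity _ _ _ _ _ _ _ _ wave x y Hxy) as [Heven [_ Hodd]].
  pose proof (ratio_lt_1_right (- x) y ltac:(lra) Hxy') as Hlt.
  rewrite Heven, Hodd in Hlt.
  replace (- v x y / u x y) with (- (v x y / u x y)) in Hlt by (unfold Rdiv; ring).
  rewrite Rabs_Ropp in Hlt; exact Hlt.
Qed.

(* Clamping [y] into [[-d, eta x]] extends the ratio continuously to a rectangle. *)
Lemma ratio_uniform_bound :
  exists c, c < 1 /\ forall x y, Omega_bar d eta x y -> Rabs (v x y / u x y) <= c.
Proof.
  destruct (sw_decay _ _ _ _ _ _ _ _ wave (- c0 / 2)) as [M HM]; [lra|].
  destruct (Ckbdd_R_bounded_above 4 eta eta_reg) as [B HB].
  destruct (rectangle_sup_lt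
              (fun a b => Rabs (v a (clamp (-d) (eta a) b) / u a (clamp (-d) (eta a) b)))
              (-M) M (-d) B 1) as [c [Hc Hbound]].
  { intros a b _ _. split.
    - apply (continuity_2d_clamp (fun s t => Rabs (v s t / u s t)) eta).
      + intros s; left; apply eta_above_bed.
      + intros s; apply (Ckbdd_R_continuous 4), eta_reg.
      + exact ratio_continuous_bar.
    - apply ratio_lt_1, clamp_between; left; apply eta_above_bed. }
  exists (Rmax c (1 / 2)); split; [apply Rmax_case; lra|].
  intros x y Hxy. destruct (Rlt_dec M (Rabs x)) as [Hfar | Hnear].
  - apply Rle_trans with (1 / 2); [|apply Rmax_r].
    destruct (HM x Hfar) as [_ Hdecay].
    destruct (Hdecay y nil Hxy ltac:(simpl; lia)) as [Hv _]; simpl in Hv.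
    pose proof (u_le_c0_bar x y Hxy).
    rewrite Rabs_div, (Rabs_left (u x y)) by lra.
    apply Rle_div_l; lra.
  - apply Rnot_lt_le, Rabs_le_between in Hnear. pose proof (HB x). unfold Omega_bar in Hxy.
    specialize (Hbound x y Hnear ltac:(lra)); cbv beta in Hbound.
    rewrite clamp_id in Hbound by lra.
    eapply Rle_trans; [exact Hbound| apply Rmax_l].
Qed.

End MonotoneWave.

Theorem lemma4p3 (g Patm : R) (u v P : R -> R -> R) (eta uinf : R -> R) (d : R) :
  0 < g ->
  in_W g Patm u v P eta uinf d ->
  (forall x y, 0 < x -> -d < y <= eta x -> pDx u x y < 0) ->
  exists c : R, c < 1 /\
    forall x y, Omega_bar d eta x y -> Rabs (v x y / u x y) <= c.
Proof.
  intros _ [wave [[c0 [Hc0 Hu]] [Hstream Hclass]]] Hux.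
  pose proof (sw_eta_above_bed _ _ _ _ _ _ _ _ wave) as Hbed.
  assert (Hmono : monotone_wave d eta v).
  { destruct Hclass as [Hmono | Htriv]; [exact Hmono| exfalso].
    set (y := (eta 1 - d) / 2). pose proof (Hbed 1).
    pose proof (Hux 1 y Rlt_0_1 ltac:(unfold y; lra)) as Hneg.
    rewrite (trivial_wave_pDx_zero d eta u v P 1 y Htriv) in Hneg
      by (unfold Omega_bar, y; lra).
    lra. }
  apply (ratio_uniform_bound g Patm u v P eta uinf d c0); auto.
  apply (vorticity_nonpos d eta u v Hbed); [|exact Hstream].
  intros x y Hxy; pose proof (Hu x y Hxy); lra.
Qed.
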